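(* Let $R$ be a commutative multiplicative hyperring with identity $1$, let $\alpha$ be a good endomorphism of $R$, and let $I$ be an $\alpha$-prime hyperideal of $R$. Then $\alpha(I)\subseteq I$.
   Context: A multiplicative hyperring is an abelian group $(R,+)$ with a hyperoperation $\circ:R\times R\to \mathcal P^*(R)$ (nonempty subsets) such that $a\circ(b\circ c)=(a\circ b)\circ c$, $a\circ(b+c)\subseteq a\circ b+a\circ c$, $(b+c)\circ a\subseteq b\circ a+c\circ a$, and $a\circ(-b)=(-a)\circ b=-(a\circ b)$. Products of subsets are unions of elementwise products. Commutative means $a\circ b=b\circ a$. An identity $1$ satisfies $a\in1\circ a$ for all $a$. A hyperideal is a nonempty $I\subseteq R$ closed under subtraction with $r\circ x\subseteq I$ for $r\in R$, $x\in I$. Standing assumption: every hyperideal is a $\mathbf C$-hyperideal, i.e. for every finite product $A=r_1\circ\cdots\circ r_n$, $A\cap I\neq\emptyset$ implies $A\subseteq I$. A good endomorphism $\alpha$ satisfies $\alpha(x+y)=\alpha(x)+\alpha(y)$ and $\alpha(x\circ y)=\alpha(x)\circ\alpha(y)$. A hyperideal $I$ is $\alpha$-prime if for all $x,y\in R$, $x\circ y\subseteq I$ implies $x\in I$ or $\alpha(y)\in I$. *)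

From mathcomp Require Import all_boot all_algebra.
Set Implicit Arguments. Unset Strict Implicit. Unset Printing Implicit Defensive.
Import GRing.Theory.
Local Open Scope ring_scope.

(* A hyperoperation is represented by  hop a b : R -> Prop  (the set a o b). *)
Definition hyperop (R : zmodType) := R -> R -> R -> Prop.

Definition setprod (R : zmodType) (hop : hyperop R) (A B : R -> Prop) : R -> Prop :=
  fun z => exists x y, A x /\ B y /\ hop x y z.

Definition setadd (R : zmodType) (A B : R -> Prop) : R -> Prop :=
  fun z => exists u v, A u /\ B v /\ z = u + v.

Definition subset (R : Type) (A B : R -> Prop) := forall x, A x -> B x.
Definition seteq (R : Type) (A B : R -> Prop) := forall x, A x <-> B x.

Definition sing (R : Type) (a : R) : R -> Prop := fun x => x = a.

Record mult_hyperring (R : zmodType) (hop : hyperop R) : Prop := {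
  mh_nonempty : forall a b, exists c, hop a b c;
  mh_assoc : forall a b c,
    seteq (setprod hop (sing a) (hop b c)) (setprod hop (hop a b) (sing c));
  mh_distrl : forall a b c,
    subset (hop a (b + c)) (setadd (hop a b) (hop a c));
  mh_distrr : forall a b c,
    subset (hop (b + c) a) (setadd (hop b a) (hop c a));
  mh_oppr : forall a b, seteq (hop a (- b)) (fun x => hop a b (- x));
  mh_oppl : forall a b, seteq (hop (- a) b) (fun x => hop a b (- x))
}.

Definition hcommutative (R : zmodType) (hop : hyperop R) :=
  forall a b, seteq (hop a b) (hop b a).

Definition hidentity (R : zmodType) (hop : hyperop R) (one : R) :=
  forall a, hop one a a.

Definition hyperideal (R : zmodType) (hop : hyperop R) (I : R -> Prop) :=
  (exists x, I x) /\
  (forall x y, I x -> I y -> I (x - y)) /\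
  (forall r x, I x -> subset (hop r x) I).

(* Finite product r_0 o r_1 o ... o r_n (right-associated; by associativity
   the bracketing is irrelevant). *)
Fixpoint hprod (R : zmodType) (hop : hyperop R) (r : R) (s : seq R) : R -> Prop :=
  match s with
  | [::] => sing r
  | r' :: s' => setprod hop (sing r) (hprod hop r' s')
  end.

Definition C_hyperideal (R : zmodType) (hop : hyperop R) (I : R -> Prop) :=
  hyperideal hop I /\
  forall (r : R) (s : seq R),
    (exists z, hprod hop r s z /\ I z) -> subset (hprod hop r s) I.

Definition good_endo (R : zmodType) (hop : hyperop R) (alpha : R -> R) :=
  (forall x y, alpha (x + y) = alpha x + alpha y) /\
  (forall x y, seteq (fun z => exists w, hop x y w /\ z = alpha w)
                     (hop (alpha x) (alpha y))).

Definition alpha_prime (R : zmodType) (hop : hyperop R) (alpha : R -> R)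
    (I : R -> Prop) :=
  hyperideal hop I /\
  forall x y, subset (hop x y) I -> I x \/ I (alpha y).

From Pilot Require Import Defs.
From mathcomp Require Import all_boot all_algebra.
Local Open Scope ring_scope.
Set Implicit Arguments. Unset Strict Implicit. Unset Printing Implicit Defensive.

(* Since [x ∈ I], the product [1 ∘ x] lies in [I], so [α]-primality gives
   [1 ∈ I] or [α x ∈ I]; and a hyperideal containing the identity is all of
   [R], because [y ∈ 1 ∘ y = y ∘ 1 ⊆ I]. *)

Lemma hyperideal_absorbs (R : zmodType) (hop : hyperop R) (I : R -> Prop) r x :
  hyperideal hop I -> I x -> Defs.subset (hop r x) I.
Proof. by move=> [_ [_ absorb]]; exact: absorb. Qed.

Lemma hyperideal_identity_full (R : zmodType) (hop : hyperop R) (one : R)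
    (I : R -> Prop) :
  hcommutative hop -> hidentity hop one -> hyperideal hop I -> I one ->
  forall y, I y.
Proof.
move=> hcomm hone idI Ione y.
apply: (hyperideal_absorbs idI Ione).
by apply/hcomm; exact: hone.
Qed.

Theorem mainTheorem3 (R : zmodType) (hop : hyperop R) (one : R)
  (alpha : R -> R) (I : R -> Prop) :
  mult_hyperring hop ->
  hcommutative hop ->
  hidentity hop one ->
  (forall J : R -> Prop, hyperideal hop J -> C_hyperideal hop J) ->
  good_endo hop alpha ->
  alpha_prime hop alpha I ->
  forall x, I x -> I (alpha x).
Proof.
move=> _ hcomm hone _ _ [idI primeI] x Ix.
have one_x_in_I : Defs.subset (hop one x) I by exact: hyperideal_absorbs.
case: (primeI one x one_x_in_I) => [Ione | //].
exact: hyperideal_identity_full hcomm hone idI Ione (alpha x).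
Qed.
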